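(* Let $R$ be a commutative ring with $1$, let $A$ and $B$ be $R$-algebras, let $C,J$ be two-sided ideals of $A$, let $I$ be a two-sided ideal of $C$ (viewed as a possibly non-unital ring) and $K$ a two-sided ideal of $B$, and let $f:C\to B$ and $g:B\to C+J$ be $R$-linear maps. Assume: (1) $(C\cap J)C\subseteq I$, $C(C\cap J)\subseteq I$ and $I\subseteq C\cap J$; (2) $g(K)\subseteq J$; (3) $f(I)\subseteq K$; (4) $f$ is surjective; (5) $g$ sends idempotents to idempotents; (6) the $R$-linear maps $\overline f:C/I\to B/K$ and $\overline g:B/K\to(C+J)/J$ induced by $f$ and $g$ are multiplicative, i.e. $\overline f(xy)=\overline f(x)\overline f(y)$ and $\overline g(vw)=\overline g(v)\overline g(w)$ for all $x,y\in C/I$, $v,w\in B/K$; (7) the natural isomorphism $s:C/(C\cap J)\to(C+J)/J$ and the natural projection $q:C/I\to C/(C\cap J)$ satisfy $sq=\overline g\,\overline f$; (8) every idempotent of $A$ has a decomposition as a finite sum of pairwise orthogonal local idempotents, unique up to conjugation. Let $b\in B$ be a local idempotent with $b\notin K$. Then $g(b)\in C+J\subseteq A$ and, by (5) and (8), there are a unique $n\in\mathbb N$ and a set $\{a_0,\dots,a_n\}\subseteq A$ of pairwise orthogonal local idempotents, unique up to conjugation, with $g(b)=\sum_{i=0}^na_i$. There is exactly one $j\in\{0,\dots,n\}$ with $a_j\in C\setminus(C\cap J)$, and $a:=a_j$ satisfies $g(b)\equiv a\pmod J$ and $f(a)\equiv b\pmod K$.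
   Context: An idempotent $e$ of a ring $D$ is local if $eDe$ is a local ring. Idempotents $e,e'$ are orthogonal if $ee'=e'e=0$. *)

From HB Require Import structures.
From mathcomp Require Import all_boot all_order all_algebra.
Set Implicit Arguments. Unset Strict Implicit. Unset Printing Implicit Defensive.
Import GRing.Theory.
Local Open Scope ring_scope.

Section Defs.
Variable A : nzRingType.

Definition idem (e : A) : Prop := e * e = e.

Definition unitA (u v : A) : Prop := u * v = 1 /\ v * u = 1.

(* e is a local idempotent: e is idempotent and the corner ring eAe (with
   identity e) is local, i.e. e <> 0 and for every element y of eAe, y or
   e - y is invertible in eAe. *)
Definition local_idem (e : A) : Prop :=
  idem e /\ e != 0 /\
  forall x : A,
    let y := e * x * e in
    (exists z : A, y * (e * z * e) = e /\ (e * z * e) * y = e) \/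
    (exists z : A, (e - y) * (e * z * e) = e /\ (e * z * e) * (e - y) = e).

Definition orth (e e' : A) : Prop := e * e' = 0 /\ e' * e = 0.

Definition local_decomp (e : A) (n : nat) (a : 'I_n -> A) : Prop :=
  (forall i, local_idem (a i)) /\
  (forall i j, i != j -> orth (a i) (a j)) /\
  e = \sum_(i < n) a i.

Definition two_sided_ideal (S : {pred A}) : Prop :=
  0 \in S /\ (forall x y, x \in S -> y \in S -> x + y \in S) /\
  (forall x, x \in S -> - x \in S) /\
  (forall a x, x \in S -> a * x \in S /\ x * a \in S).

Definition ideal_in (C I : {pred A}) : Prop :=
  {subset I <= C} /\
  0 \in I /\ (forall x y, x \in I -> y \in I -> x + y \in I) /\
  (forall x, x \in I -> - x \in I) /\
  (forall c x, c \in C -> x \in I -> c * x \in I /\ x * c \in I).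
End Defs.

From HB Require Import structures.
From mathcomp Require Import all_boot all_order all_algebra.
Import GRing.Theory.
Local Open Scope ring_scope.
Set Implicit Arguments. Unset Strict Implicit.

(* Write g(b) = c + j with c in C and j in J.  Every local summand e of g(b)
   satisfies e = e c e + e j e in the local ring eAe, so e c e or
   e - e c e = e j e is a unit there, whence e lies in C or in J.  Not all
   summands lie in J, for g(b) in J would force b in K.  If a_j lies in
   C \ J and w is the sum of the other summands in C \ J, then f(a_j) and
   f(w) are orthogonal idempotents modulo K adding up to b modulo K; as b
   is local one of them lies in K, and it cannot be f(a_j), so w lies in J.
   Since a_k = w a_k for every other summand a_k in C \ J, there is none. *)

Definition eqmod (T : zmodType) (S : {pred T}) (x y : T) : bool := x - y \in S.

Lemma eqmod0 (T : zmodType) (S : {pred T}) x : eqmod S x 0 = (x \in S).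
Proof. by rewrite /eqmod subr0. Qed.

Section TwoSidedIdeal.
Variables (T : nzRingType) (S : {pred T}).
Hypothesis idealS : two_sided_ideal S.

Lemma ideal0 : 0 \in S. Proof. by case: idealS. Qed.

Lemma idealD x y : x \in S -> y \in S -> x + y \in S.
Proof. by case: idealS => _ [+ _]; apply. Qed.

Lemma idealN x : x \in S -> - x \in S.
Proof. by case: idealS => _ [_ [+ _]]; apply. Qed.

Lemma idealMl a x : x \in S -> a * x \in S.
Proof. by case: idealS => _ [_ [_ H]] /(H a) []. Qed.

Lemma idealMr a x : x \in S -> x * a \in S.
Proof. by case: idealS => _ [_ [_ H]] /(H a) []. Qed.

Lemma ideal_sum (I : finType) (P : pred I) (F : I -> T) :
  (forall i, P i -> F i \in S) -> \sum_(i | P i) F i \in S.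
Proof.
move=> SF; apply: (big_ind (fun x => x \in S)) => //; first exact: ideal0.
exact: idealD.
Qed.

Lemma eqmod_refl x : eqmod S x x.
Proof. by rewrite /eqmod subrr ideal0. Qed.

Lemma eqmod_sym x y : eqmod S x y -> eqmod S y x.
Proof. by rewrite /eqmod => Sxy; rewrite -opprB idealN. Qed.

Lemma eqmod_trans y x z : eqmod S x y -> eqmod S y z -> eqmod S x z.
Proof. by rewrite /eqmod => Sxy /(idealD Sxy); rewrite addrA subrK. Qed.

Lemma eqmodD x x' y y' :
  eqmod S x x' -> eqmod S y y' -> eqmod S (x + y) (x' + y').
Proof. by rewrite /eqmod => Sx /(idealD Sx); rewrite opprD addrACA. Qed.

Lemma eqmodN x y : eqmod S x y -> eqmod S (- x) (- y).
Proof. by rewrite /eqmod -opprD; apply: idealN. Qed.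

Lemma eqmodM x x' y y' :
  eqmod S x x' -> eqmod S y y' -> eqmod S (x * y) (x' * y').
Proof.
rewrite /eqmod => Sx Sy.
have -> : x * y - x' * y' = (x - x') * y + x' * (y - y').
  by rewrite mulrBl mulrBr addrA subrK.
by apply: idealD; [apply: idealMr | apply: idealMl].
Qed.

Lemma local_idem_orth_sum_mod (b u w : T) : local_idem b ->
  eqmod S b (u + w) -> eqmod S (u * u) u -> eqmod S (w * w) w ->
  u * w \in S -> w * u \in S -> (u \in S) || (w \in S).
Proof.
move=> [_ [_ b_loc]] b_uw uu_u ww_w uw wu.
have ub_u : eqmod S (u * b) u.
  apply: (eqmod_trans (eqmodM (eqmod_refl u) b_uw)).
  by rewrite mulrDr -[X in eqmod S _ X]addr0 eqmodD ?eqmod0.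
have wb_w : eqmod S (w * b) w.
  apply: (eqmod_trans (eqmodM (eqmod_refl w) b_uw)).
  by rewrite mulrDr -[X in eqmod S _ X]add0r eqmodD ?eqmod0.
case: (b_loc u) => /= [[z [unit_bub _]] | [z [unit_b_bub _]]].
- (* b u b is a unit of bAb, and w b u b = (w b)(u b) is congruent to w u *)
  apply/orP; right; rewrite -eqmod0; apply: eqmod_trans (eqmod_sym wb_w) _.
  have -> : w * b = w * b * (u * b) * (b * z * b).
    by rewrite -{1}unit_bub !mulrA.
  apply: eqmod_trans (eqmodM (eqmodM wb_w ub_u) (eqmod_refl _)) _.
  by rewrite eqmod0 idealMr.
- (* b - b u b is a unit of bAb, and u b (b - b u b) = u b - (u b)^2 *)
  apply/orP; left; rewrite -eqmod0; apply: eqmod_trans (eqmod_sym ub_u) _.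
  have -> : u * b = (u * b - u * b * (u * b)) * (b * z * b).
    by rewrite -{1}unit_b_bub mulrA mulrBr !mulrA.
  rewrite eqmod0 idealMr // -eqmod0.
  apply: eqmod_trans (eqmodD ub_u (eqmodN (eqmodM ub_u ub_u))) _.
  by rewrite eqmod0 -opprB idealN.
Qed.

End TwoSidedIdeal.

Lemma local_idem_mem_ideal_sum (T : nzRingType) (C J : {pred T}) (e c j : T) :
  two_sided_ideal C -> two_sided_ideal J -> local_idem e ->
  c \in C -> j \in J -> e * (c + j) * e = e -> (e \in C) || (e \in J).
Proof.
move=> idealC idealJ [_ [_ e_loc]] cC jJ e_cj.
have ece_C : e * c * e \in C by apply/idealMr/idealMl.
have eje_J : e * j * e \in J by apply/idealMr/idealMl.
case: (e_loc c) => /= [[z [ece_unit _]] | [z [e_ece_unit _]]].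
  by apply/orP; left; rewrite -ece_unit idealMr.
apply/orP; right; rewrite -e_ece_unit.
have -> : e - e * c * e = e * j * e.
  by rewrite -{1}e_cj mulrDr mulrDl addrAC subrr add0r.
exact: idealMr.
Qed.

Section OrthogonalIdempotents.
Variables (T : nzRingType) (n : nat) (a : 'I_n -> T).
Hypothesis a_idem : forall i, idem (a i).
Hypothesis a_orth : forall i j, i != j -> orth (a i) (a j).

Lemma orth_sum_mulr (Q : pred 'I_n) k :
  (\sum_(i | Q i) a i) * a k = if Q k then a k else 0.
Proof.
rewrite mulr_suml; case: ifP => Qk.
  rewrite (bigD1 k) //= big1 ?addr0; first exact: a_idem.
  by move=> i /andP[_ /a_orth[]].
by apply: big1 => i Qi; have /a_orth[] : i != k by apply: contraFneq Qk => <-.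
Qed.

Lemma orth_sum_mull (Q : pred 'I_n) k :
  a k * (\sum_(i | Q i) a i) = if Q k then a k else 0.
Proof.
rewrite mulr_sumr; case: ifP => Qk.
  rewrite (bigD1 k) //= big1 ?addr0; first exact: a_idem.
  by move=> i /andP[_]; rewrite eq_sym => /a_orth[].
by apply: big1 => i Qi; have /a_orth[] : k != i by apply: contraFneq Qk => ->.
Qed.

Lemma orth_sum_idem (Q : pred 'I_n) : idem (\sum_(i | Q i) a i).
Proof.
by rewrite /idem mulr_sumr; apply: eq_bigr => i Qi; rewrite orth_sum_mulr Qi.
Qed.

End OrthogonalIdempotents.

Section LiftingLocalIdempotents.
Variables (A B : nzRingType) (C J I : {pred A}) (K : {pred B}).
Variables (f : A -> B) (g : B -> A).
Hypotheses (idealC : two_sided_ideal C) (idealJ : two_sided_ideal J).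
Hypothesis idealK : two_sided_ideal K.
Hypothesis fD : forall x y, x \in C -> y \in C -> f (x + y) = f x + f y.
Hypothesis g_CJ :
  forall v, exists2 c, c \in C & exists2 j, j \in J & g v = c + j.
Hypothesis gD : forall v w, g (v + w) = g v + g w.
Hypothesis mulCJ_I : forall x y, x \in C -> x \in J -> y \in C -> x * y \in I.
Hypothesis gK_J : forall v, v \in K -> g v \in J.
Hypothesis fI_K : forall x, x \in I -> f x \in K.
Hypothesis f_surj : forall v, exists2 c, c \in C & f c = v.
Hypothesis fM_K :
  forall x y, x \in C -> y \in C -> eqmod K (f (x * y)) (f x * f y).
Hypothesis gf_J : forall x, x \in C -> eqmod J (g (f x)) x.

Lemma f0 : f 0 = 0.
Proof. by apply: (@addrI _ (f 0)); rewrite -fD ?addr0 ?ideal0. Qed.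

Lemma g_sub v w : g (v - w) = g v - g w.
Proof. by rewrite -[in g v](subrK w v) (gD (v - w)) addrK. Qed.

Lemma f_memK x : x \in C -> (f x \in K) = (x \in J).
Proof.
move=> xC; apply/idP/idP => [/gK_J fxJ | xJ].
  by rewrite -eqmod0 (eqmod_trans idealJ (eqmod_sym idealJ (gf_J xC))) ?eqmod0.
(* f x = f x * f c with f c = 1, and x c lies in I *)
have [c cC fc1] := f_surj 1.
rewrite -eqmod0 -[f x]mulr1 -fc1.
rewrite (eqmod_trans idealK (eqmod_sym idealK (fM_K xC cC))) //.
by rewrite eqmod0 fI_K ?mulCJ_I.
Qed.

Lemma g_memJ v : (g v \in J) = (v \in K).
Proof.
have [c cC <-] := f_surj v; apply/idP/idP => [gfcJ | /gK_J //].
rewrite f_memK // -eqmod0.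
by rewrite (eqmod_trans idealJ (eqmod_sym idealJ (gf_J cC))) ?eqmod0.
Qed.

Lemma g_eqmod v w : eqmod J (g v) (g w) = eqmod K v w.
Proof. by rewrite /eqmod -g_sub g_memJ. Qed.

Lemma f_idem_mod e : e \in C -> idem e -> eqmod K (f e * f e) (f e).
Proof.
by move=> eC e_idem; have := fM_K eC eC; rewrite e_idem; apply: eqmod_sym.
Qed.

Lemma f_orth_mod e e' : e \in C -> e' \in C -> e * e' = 0 -> f e * f e' \in K.
Proof.
move=> eC e'C ee'0; have := fM_K eC e'C.
by rewrite /eqmod ee'0 f0 sub0r => /(idealN idealK); rewrite opprK.
Qed.

Variables (b : B) (n : nat) (a : 'I_n -> A).
Hypotheses (b_loc : local_idem b) (b_notK : b \notin K).
Hypothesis gb_dec : local_decomp (g b) a.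

Let a_idem i : idem (a i). Proof. by case: gb_dec => /(_ i)[]. Qed.
Let a_orth i j : i != j -> orth (a i) (a j).
Proof. by case: gb_dec => _ [+ _]; apply. Qed.
Let gbE : g b = \sum_(i < n) a i. Proof. by case: gb_dec => _ []. Qed.

Let in_CnotJ i := (a i \in C) && (a i \notin J).

Lemma summand_memC_or_J i : (a i \in C) || (a i \in J).
Proof.
have [c cC [j jJ gb_cj]] := g_CJ b; have [a_loc _] := gb_dec.
apply: local_idem_mem_ideal_sum idealC idealJ (a_loc i) cC jJ _.
by rewrite -gb_cj gbE (orth_sum_mull a_idem a_orth xpredT) a_idem.
Qed.

Lemma gb_eqmod_CnotJ : eqmod J (g b) (\sum_(i | in_CnotJ i) a i).
Proof.
rewrite gbE (bigID in_CnotJ) /= /eqmod addrAC subrr add0r.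
apply: (ideal_sum idealJ) => i; rewrite negb_and negbK.
by case/orP=> // /negPf aiC; have := summand_memC_or_J i; rewrite aiC.
Qed.

Lemma exists_CnotJ : exists j, in_CnotJ j.
Proof.
case: (pickP in_CnotJ) => [j | none]; first by exists j.
case/negP: b_notK; rewrite -g_memJ -eqmod0.
by have := gb_eqmod_CnotJ; rewrite big_pred0.
Qed.

Lemma other_CnotJ_memJ j :
  in_CnotJ j -> \sum_(i | in_CnotJ i && (i != j)) a i \in J.
Proof.
move=> /[dup] CnotJ_j /andP[ajC ajJ].
set w := \sum_(i | _) _.
have wC : w \in C by apply: (ideal_sum idealC) => i /andP[/andP[]].
have aw0 : a j * w = 0 by rewrite (orth_sum_mull a_idem a_orth) eqxx andbF.
have wa0 : w * a j = 0 by rewrite (orth_sum_mulr a_idem a_orth) eqxx andbF.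
have b_split : eqmod K b (f (a j) + f w).
  rewrite -fD // -g_eqmod; apply: (eqmod_trans idealJ gb_eqmod_CnotJ).
  rewrite (bigD1 j) //=; apply: (eqmod_sym idealJ).
  by apply: gf_J; apply: idealD.
have := local_idem_orth_sum_mod idealK b_loc b_split
  (f_idem_mod ajC (a_idem j)) (f_idem_mod wC (orth_sum_idem a_idem a_orth _))
  (f_orth_mod ajC wC aw0) (f_orth_mod wC ajC wa0).
by rewrite !f_memK // (negPf ajJ).
Qed.

Lemma CnotJ_unique j k : in_CnotJ j -> in_CnotJ k -> k = j.
Proof.
move=> CnotJ_j CnotJ_k; apply/eqP/negPn/negP => kj.
have := idealMr idealJ (a k) (other_CnotJ_memJ CnotJ_j).
rewrite (orth_sum_mulr a_idem a_orth) CnotJ_k kj /=.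
by case/andP: CnotJ_k => _ /negPf ->.
Qed.

Lemma gb_eqmod_CnotJ_summand j : in_CnotJ j -> eqmod J (g b) (a j).
Proof.
move=> CnotJ_j; have <- : \sum_(i | in_CnotJ i) a i = a j.
  by apply: big_pred1 => k; apply/idP/eqP => [/(CnotJ_unique CnotJ_j) | ->].
exact: gb_eqmod_CnotJ.
Qed.

Lemma f_CnotJ_summand_eqmod j : in_CnotJ j -> eqmod K (f (a j)) b.
Proof.
move=> /[dup] /andP[ajC _] /gb_eqmod_CnotJ_summand gb_aj.
by rewrite -g_eqmod (eqmod_trans idealJ (gf_J ajC)) // eqmod_sym.
Qed.

Lemma unique_CnotJ_summand : exists j,
  [/\ a j \in C, a j \notin J, (forall k, a k \in C -> a k \notin J -> k = j),
      eqmod J (g b) (a j) & eqmod K (f (a j)) b].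
Proof.
have [j /[dup] CnotJ_j /andP[ajC ajJ]] := exists_CnotJ.
exists j; split => //.
- by move=> k akC akJ; apply: CnotJ_unique CnotJ_j _; apply/andP.
- exact: gb_eqmod_CnotJ_summand.
- exact: f_CnotJ_summand_eqmod.
Qed.

End LiftingLocalIdempotents.

Theorem proposition4p7 (R : comPzRingType) (A B : algType R)
    (C J I : {pred A}) (K : {pred B}) (f : A -> B) (g : B -> A) :
  two_sided_ideal C -> two_sided_ideal J -> ideal_in C I ->
  two_sided_ideal K ->
  (* f : C -> B is R-linear (only its values on C matter) *)
  (forall x y, x \in C -> y \in C -> f (x + y) = f x + f y) ->
  (forall (r : R) x, x \in C -> f (r *: x) = r *: f x) ->
  (* g : B -> C + J is R-linear *)
  (forall v, exists2 c, c \in C & exists2 j, j \in J & g v = c + j) ->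
  (forall v w, g (v + w) = g v + g w) ->
  (forall (r : R) v, g (r *: v) = r *: g v) ->
  (* (1) *)
  (forall x y, x \in C -> x \in J -> y \in C -> x * y \in I) ->
  (forall x y, x \in C -> x \in J -> y \in C -> y * x \in I) ->
  (forall x, x \in I -> x \in C /\ x \in J) ->
  (* (2) *)
  (forall v, v \in K -> g v \in J) ->
  (* (3) *)
  (forall x, x \in I -> f x \in K) ->
  (* (4) *)
  (forall v, exists2 c, c \in C & f c = v) ->
  (* (5) *)
  (forall v, idem v -> idem (g v)) ->
  (* (6) *)
  (forall x y, x \in C -> y \in C -> f (x * y) - f x * f y \in K) ->
  (forall v w, g (v * w) - g v * g w \in J) ->
  (* (7) *)
  (forall x, x \in C -> g (f x) - x \in J) ->
  (* (8) *)
  (forall e : A, idem e -> exists n (a : 'I_n -> A), local_decomp e a) ->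
  (forall (e : A) n m (a : 'I_n -> A) (a' : 'I_m -> A),
      local_decomp e a -> local_decomp e a' ->
      exists u v, unitA u v /\
        exists h : 'I_n -> 'I_m, bijective h /\ forall i, a' (h i) = u * a i * v) ->
  forall b : B, local_idem b -> b \notin K ->
    (exists2 c, c \in C & exists2 j, j \in J & g b = c + j) /\
    idem (g b) /\
    (exists n (a : 'I_n -> A), local_decomp (g b) a) /\
    (forall n (a : 'I_n -> A), local_decomp (g b) a ->
       exists j : 'I_n,
         [/\ a j \in C, a j \notin J,
             (forall k : 'I_n, a k \in C -> a k \notin J -> k = j),
             g b - a j \in J & f (a j) - b \in K]).
Proof.
move=> idealC idealJ _ idealK fD _ g_CJ gD _ mulCJ_I _ _ gK_J fI_K f_surj
  g_idem fM_K _ gf_J decomp_exists _ b b_loc b_notK.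
have gb_idem := g_idem b b_loc.1.
split; first exact: g_CJ.
split; first exact: gb_idem.
split; first exact: decomp_exists.
move=> n a gb_dec.
exact: (unique_CnotJ_summand idealC idealJ idealK fD g_CJ gD mulCJ_I gK_J fI_K
  f_surj fM_K gf_J b_loc b_notK gb_dec).
Qed.
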